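(* Let $k$ be a field. The following are equivalent: (i) for every finite group $G$ there exists a finite separable extension $L/k$ with $\mathrm{Aut}(L/k)\cong G$; (ii) there exists a family $\{\Gamma_n\}_{n\ge1}$ of finite groups satisfying property (RÉAL) and such that every $\Gamma_n$ is the Galois group of some finite Galois extension of $k$.
   Context: A family $\{\Gamma_n\}_{n\geq1}$ of finite groups satisfies property (RÉAL) if for every finite group $G$ there exist an integer $n\ge1$ and a subgroup $H$ of $\Gamma_n$ such that $N_{\Gamma_n}(H)/H\cong G$, where $N_{\Gamma_n}(H)$ denotes the normalizer of $H$ in $\Gamma_n$. *)

From HB Require Import structures.
From mathcomp Require Import all_boot all_order all_algebra all_fingroup all_solvable all_field.
Set Implicit Arguments. Unset Strict Implicit. Unset Printing Implicit Defensive.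
Import GRing.Theory.

(* Aut(L/k) ≅ G, for a finite extension L of F (L : fieldExtType F):
   an injective group homomorphism phi from G into the k-automorphisms of L
   (w.r.t. composition) whose image is the whole set of k-automorphisms of L.
   kAut 1 fullv f  <=>  f is an F-algebra automorphism of L. *)
Definition kAut_isog (F : fieldType) (L : fieldExtType F)
    (gT : finGroupType) (G : {group gT}) : Prop :=
  exists phi : gT -> 'End(L),
    [/\ {in G, forall x, kAut 1%VS fullv (phi x)},
        {in G &, forall x y, phi (x * y)%g = (phi x \o phi y)%VF},
        {in G &, injective phi}
      & forall f : 'End(L), kAut 1%VS fullv f -> exists2 x, x \in G & phi x = f].

(* Property (REAL) for a family (Gamma_n)_{n >= 1} of finite groups
   (the value at n = 0 is irrelevant). Gamma_n is the whole group [set: Gamma n],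
   so 'N(H) is the normalizer of H in Gamma_n. *)
Definition REAL (Gamma : nat -> finGroupType) : Prop :=
  forall (gT : finGroupType) (G : {group gT}),
    exists n : nat, (0 < n)%N /\
      exists H : {group Gamma n}, (('N(H) / H)%g \isog G)%g.

From HB Require Import structures.
From mathcomp Require Import all_boot all_order all_algebra all_fingroup all_solvable all_field.
From Stdlib Require Import Classical ClassicalEpsilon.
Set Implicit Arguments. Unset Strict Implicit. Unset Printing Implicit Defensive.
Import GRing.Theory.

(* (i) => (ii): if L/k is separable with Aut(L/k) = G, let E be a Galois closure of L,
   Gamma = Gal(E/k) and H = Gal(E/L). The k-automorphisms of L are exactly the
   restrictions of the elements of Gamma that normalise H, so G = N_Gamma(H)/H. Every
   finite group is a permutation group on some {0, ..., m-1}, so the finite groups are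
   countable up to isomorphism, and listing one such Gamma for each of them gives a
   family with (REAL).
   (ii) => (i): if G = N(H)/H with H <= Gamma_n = Gal(E/k), the same correspondence
   shows that the fixed field of H, which is separable over k, realises G. *)

Section GroupFacts.
Local Open Scope group_scope.

Lemma isog_of_inj_onto (gT rT : finGroupType) (G : {group gT}) (A : {group rT})
    (f : gT -> rT) :
  {in G &, {morph f : x y / x * y}} -> {in G &, injective f} ->
  {in G, forall x, f x \in A} -> (forall y, y \in A -> exists2 x, x \in G & f x = y) ->
  G \isog A.
Proof.
move=> fM f_inj fGA fAG; apply/isogP; exists (Morphism fM); first exact/injmP.
apply/setP=> y; apply/idP/idP => [/morphimP[x _ Gx ->] | /fAG[x Gx <-]].
  exact: fGA.
exact: mem_morphim.
Qed.

Lemma Cayley_ord_isog (gT : finGroupType) (G : {group gT}) :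
  exists A : {group {perm 'I_#|gT|}}, G \isog A.
Proof.
pose mulr_ord x (i : 'I_#|gT|) := enum_rank (enum_val i * x).
have mulr_ord_inj x : injective (mulr_ord x).
  by move=> i j /enum_rank_inj /mulIg /enum_val_inj.
pose rho x := perm (mulr_ord_inj x).
have rhoM : {in G &, {morph rho : x y / x * y}}.
  by move=> x y _ _; apply/permP=> i; rewrite permM !permE /mulr_ord enum_rankK mulgA.
exists (Morphism rhoM @* G)%G; apply/isogP; exists (Morphism rhoM) => //.
apply/injmP=> x y _ _ /permP /(_ (enum_rank 1)).
by rewrite !permE /mulr_ord enum_rankK !mul1g => /enum_rank_inj.
Qed.

Lemma normQ_isog_transfer (aT rT : finGroupType) (H : {group aT}) :
  [set: aT] \isog [set: rT] -> exists K : {group rT}, 'N(K) / K \isog 'N(H) / H.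
Proof.
case/isogP=> f f_inj f_onto; exists (f @* H)%G.
pose fN := restrm (subsetT 'N(H)) f.
have fN_inj : 'injm fN by apply: injm_restrm.
have fNE (A : {set aT}) : A \subset 'N(H) -> fN @* A = f @* A.
  by move=> sAN; rewrite morphim_restrm (setIidPr sAN).
have fN_norm : fN @* 'N(H) = 'N(f @* H).
  by rewrite fNE // injm_norm ?subsetT // f_onto setTI.
rewrite isog_sym /= -fN_norm -fNE ?normG // -(morphim_quotm fN (normalG H)).
by apply: sub_isog => //; apply: injm_quotm.
Qed.

End GroupFacts.

Local Open Scope ring_scope.

Section AutomorphismGroups.
Variable F : fieldType.

Lemma kAut1_multiplicative (L : fieldExtType F) (f : 'End(L)) :
  kAut 1 fullv f <-> multiplicative f.
Proof. by rewrite kAutfE; split=> /kHom_lrmorphism. Qed.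

Lemma comp_lfun_multiplicative (L M N : fieldExtType F) (f : 'Hom(M, N)) (g : 'Hom(L, M)) :
  multiplicative f -> multiplicative g -> multiplicative (f \o g)%VF.
Proof.
move=> [fM f1] [gM g1]; split=> [a b|]; last by rewrite comp_lfunE g1.
by rewrite !comp_lfunE gM fM.
Qed.

Lemma kAut_isog_uniq (L : fieldExtType F) (gT rT : finGroupType)
    (G : {group gT}) (A : {group rT}) :
  kAut_isog L G -> kAut_isog L A -> (G \isog A)%g.
Proof.
move=> [phi [phiA phiM phi_inj phi_onto]] [psi [psiA psiM psi_inj psi_onto]].
pose f x := odflt 1%g [pick y in A | psi y == phi x].
have fP x : x \in G -> f x \in A /\ psi (f x) = phi x.
  rewrite /f => Gx; case: pickP => [y /andP[Ay /eqP] // | noy].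
  by have [y Ay Dy] := psi_onto _ (phiA x Gx); have := noy y; rewrite Ay Dy eqxx.
apply: (@isog_of_inj_onto _ _ _ _ f).
- move=> x y Gx Gy; have [Afx Dfx] := fP x Gx; have [Afy Dfy] := fP y Gy.
  have [Afxy Dfxy] := fP _ (groupM Gx Gy).
  by apply: psi_inj; rewrite ?groupM // psiM // Dfxy Dfx Dfy phiM.
- move=> x y Gx Gy fxy; apply: phi_inj => //.
  by rewrite -(fP x Gx).2 -(fP y Gy).2 fxy.
- by move=> x /fP[].
- move=> y Ay; have [x Gx Dx] := phi_onto _ (psiA y Ay).
  by exists x => //; apply: psi_inj; rewrite ?(fP x Gx).1 // (fP x Gx).2.
Qed.

Lemma kAut_isog_trans (L : fieldExtType F) (gT rT : finGroupType)
    (G : {group gT}) (A : {group rT}) :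
  kAut_isog L G -> (A \isog G)%g -> kAut_isog L A.
Proof.
move=> [phi [phiA phiM phi_inj phi_onto]] /isogP[f f_inj fA].
have fG x : x \in A -> f x \in G by move=> Ax; rewrite -fA mem_morphim.
exists (phi \o f); split=> [x Ax | x y Ax Ay | x y Ax Ay /phi_inj | h /phi_onto[y]].
- exact/phiA/fG.
- by rewrite /= morphM // phiM ?fG.
- by move/(_ (fG x Ax) (fG y Ay)); apply: (injmP f_inj).
- by rewrite -fA => /morphimP[x _ Ax ->] <-; exists x.
Qed.

Lemma kAut_isog_ahom (L M : fieldExtType F) (gT : finGroupType) (G : {group gT})
    (f : 'AHom(L, M)) :
  limg f = fullv -> kAut_isog L G -> kAut_isog M G.
Proof.
move=> f_onto [phi [phiA phiM phi_inj phi_onto]].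
pose g := (f^-1)%VF; have fK : cancel f g := lker0_lfunK (AHom_lker0 f).
have gK : cancel g f by move=> b; rewrite limg_lfunVK // f_onto memvf.
have fM : multiplicative f by split=> [a b|]; rewrite ?rmorphM ?rmorph1.
have gM : multiplicative g.
  split=> [a b|]; last by rewrite -fM.2 fK.
  by rewrite -{1}(gK a) -{1}(gK b) -fM.1 fK.
pose conj (h : 'End(L)) : 'End(M) := (f \o h \o g)%VF.
exists (conj \o phi); split=> [x Gx | x y Gx Gy | x y Gx Gy | h].
- apply/kAut1_multiplicative/comp_lfun_multiplicative => //.
  exact/comp_lfun_multiplicative/kAut1_multiplicative/phiA.
- by apply/lfunP=> a; rewrite /= phiM // !comp_lfunE fK.
- move=> /= conj_xy; apply: phi_inj => //; apply/lfunP=> b.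
  have := congr1 (fun h : 'End(M) => g (h (f b))) conj_xy.
  by rewrite /= !comp_lfunE !fK.
- move/kAut1_multiplicative=> hM.
  have [|x Gx Dx] := phi_onto (g \o h \o f)%VF.
    apply/kAut1_multiplicative/comp_lfun_multiplicative => //.
    exact: comp_lfun_multiplicative.
  by exists x => //; apply/lfunP=> a; rewrite /= Dx !comp_lfunE !gK.
Qed.

End AutomorphismGroups.

Section QuotientAutomorphisms.
Local Open Scope group_scope.

Lemma kAut_isog_quotient (F : fieldType) (L : fieldExtType F) (gT : finGroupType)
    (H : {group gT}) (rho : gT -> 'End(L)) :
    {in 'N(H), forall x, kAut 1 fullv (rho x)} ->
    {in 'N(H) &, forall x y, rho (x * y) = (rho x \o rho y)%VF} ->
    {in H, forall x, rho x = \1%VF} ->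
    {in 'N(H) &, forall x y, rho x = rho y -> x^-1 * y \in H} ->
    (forall f, kAut 1 fullv f -> exists2 x, x \in 'N(H) & rho x = f) ->
  kAut_isog L ('N(H) / H)%G.
Proof.
move=> rhoA rhoM rhoH rho_inj rho_onto.
have rho_repr x : x \in 'N(H) -> rho (repr (coset H x)) = rho x.
  move=> Nx; have := mem_repr_coset (coset H x); rewrite val_coset // => /rcosetP[h Hh ->].
  by rewrite rhoM ?(subsetP (normG H) h Hh) // rhoH // comp_lfun1l.
have NH (c : coset_of H) : repr c \in 'N(H) := repr_coset_norm c.
exists (fun c : coset_of H => rho (repr c)).
split=> [c _ | c d _ _ | c d _ _ | f /rho_onto[x Nx <-]].
- exact/rhoA/NH.
- by rewrite -{1}(coset_reprK c) -{1}(coset_reprK d) -morphM //= rho_repr ?groupM ?rhoM.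
- move/rho_inj=> /(_ (NH c) (NH d)) HcVd.
  by rewrite -(coset_reprK c) -(coset_reprK d) -[repr d](mulKVg (repr c)) coset_kerr.
- by exists (coset H x); rewrite ?mem_quotient ?rho_repr.
Qed.

End QuotientAutomorphisms.

Section GaloisRestriction.
Local Open Scope group_scope.
Variables (k : fieldType) (E : splittingFieldType k) (K : {subfield E}).
Hypothesis galE : galois 1 {:E}.
Local Notation H := 'Gal({:E} / K)%G.

Lemma norm_gal_fixedField (s : gal_of {:E}) : (s \in 'N(H)) = ((s @: K)%VS == K).
Proof.
have galM (M : {subfield E}) : fixedField 'Gal({:E} / M) = M.
  by apply/galois_fixedField/(galoisS _ galE); rewrite sub1v subvf.
apply/normP/eqP=> [NsH | sK]; last by rewrite gal_conjg sK.
by rewrite -{2}(galM K) -NsH gal_conjg (galM (s @: K)%AS).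
Qed.

Definition galres (s : gal_of {:E}) : 'End(subvs_of K) :=
  (linfun (vsproj K) \o s \o linfun vsval)%VF.

Lemma gal_norm_memv (s : gal_of {:E}) a : s \in 'N(H) -> a \in K -> s a \in K.
Proof. by rewrite norm_gal_fixedField => /eqP sK Ka; rewrite -sK memv_img. Qed.

Lemma galresE (s : gal_of {:E}) v : s \in 'N(H) -> vsval (galres s v) = s (vsval v).
Proof. by move=> Ns; rewrite !comp_lfunE !lfunE /= vsprojK ?gal_norm_memv ?subvsP. Qed.

Lemma galresM : {in 'N(H) &, forall s t, galres (s * t) = (galres t \o galres s)%VF}.
Proof.
move=> s t Ns Nt; apply/lfunP=> v; apply: subvs_inj.
by rewrite comp_lfunE !galresE ?groupM // galM ?memvf.
Qed.

Lemma galres_multiplicative (s : gal_of {:E}) : s \in 'N(H) -> multiplicative (galres s).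
Proof.
move=> Ns; split=> [u v|]; apply: subvs_inj; rewrite galresE //=.
  by rewrite !rmorphM /= !galresE.
by rewrite algid1 rmorph1.
Qed.

Lemma galres_Gal_id (s : gal_of {:E}) : s \in H -> galres s = \1%VF.
Proof.
move=> Hs; apply/lfunP=> v; apply: subvs_inj; rewrite id_lfunE galresE ?(subsetP (normG H)) //.
exact: fixed_gal (subvf K) Hs (subvsP v).
Qed.

Lemma galres_inj : {in 'N(H) &, forall s t, galres s = galres t -> s * t^-1 \in H}.
Proof.
move=> s t Ns Nt st_eq; rewrite gal_kHom ?subvf //; apply/kAHomP=> a Ka.
have := congr1 (fun f : 'End(subvs_of K) => vsval (f (vsproj K a))) st_eq.
rewrite /= !galresE // vsprojK // galM ?memvf // => ->.
by rewrite -galM ?memvf // mulgV gal_id.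
Qed.

Lemma galres_onto (f : 'End(subvs_of K)) :
  multiplicative f -> exists2 s, s \in 'N(H) & galres s = f.
Proof.
move=> [fM f1]; pose g : 'End(E) := (linfun vsval \o f \o linfun (vsproj K))%VF.
have gE a : a \in K -> g a = vsval (f (vsproj K a)).
  by move=> Ka; rewrite !comp_lfunE !lfunE.
have vsprojM : {in K &, {morph vsproj K : a b / (a * b)%R}}.
  by move=> a b Ka Kb; apply: subvs_inj; rewrite rmorphM /= !vsprojK ?rpredM.
have vsproj1 : vsproj K 1%R = 1%R.
  by apply: subvs_inj; rewrite vsprojK ?mem1v ?rmorph1.
have gK : kHom 1 K g.
  rewrite k1HomE; apply/ahom_inP; split=> [a b Ka Kb|].
    by rewrite !gE ?rpredM // vsprojM // fM rmorphM.
  by rewrite gE ?mem1v // vsproj1 f1 rmorph1.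
(* Extend f to an automorphism t of the normal extension E; t stabilises K. *)
have [|t _ gt] := kHom_to_gal _ (normalFieldf 1) gK; first by rewrite sub1v subvf.
have tK : (t @: K)%VS = K.
  apply/eqP; rewrite eqEdim limg_dim_eq ?(eqP (AEnd_lker0 _)) ?capv0 // leqnn andbT.
  by apply/subvP=> _ /memv_imgP[a Ka ->]; rewrite -gt // gE // subvsP.
exists t; first by rewrite norm_gal_fixedField tK.
apply/lfunP=> v; apply: subvs_inj.
by rewrite galresE ?norm_gal_fixedField ?tK // -gt ?subvsP // gE ?subvsP // vsvalK.
Qed.

Lemma kAut_isog_normQ_Gal : kAut_isog (subvs_of K) ('N(H) / H)%G.
Proof.
(* Galois automorphisms compose on the right (see [galM]), hence the inversion. *)
apply: (@kAut_isog_quotient _ _ _ _ (fun s => galres s^-1)).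
- by move=> s Ns; apply/kAut1_multiplicative/galres_multiplicative; rewrite groupV.
- by move=> s t Ns Nt; rewrite invMg galresM ?groupV.
- by move=> s Hs; rewrite galres_Gal_id ?groupV.
- by move=> s t Ns Nt /galres_inj; rewrite invgK; apply; rewrite groupV.
- move=> f /kAut1_multiplicative/galres_onto[s Ns <-].
  by exists s^-1; rewrite ?groupV ?invgK.
Qed.

End GaloisRestriction.

Lemma separable_ahom (F : fieldType) (L M : fieldExtType F) (f : 'AHom(L, M)) :
  separable 1 {:M} -> separable 1 {:L}.
Proof.
move=> /separableP sepM; apply/separableP=> y _.
rewrite /separable_element -(separable_map f) map_minPoly aimg1.
exact: sepM (memvf _).
Qed.

Lemma gal1T (k : fieldType) (E : splittingFieldType k) :
  'Gal({:E} / 1)%g = [set: gal_of {:E}].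
Proof.
apply/setP=> s; rewrite inE gal_kAut ?sub1v //; apply/kAut1_multiplicative.
by split=> [a b|]; rewrite ?rmorphM ?rmorph1.
Qed.

Lemma exists_irreducible_dvdp (F : fieldType) (p : {poly F}) :
  (1 < size p)%N -> exists2 r, r %| p & irreducible_poly r.
Proof.
elim: {p}_.+1 {-2}p (ltnSn (size p)) => // n IHn p lt_p_n p_gt1.
have [irr_p | red_p] := classic (irreducible_poly p); first by exists p.
have [q /and3P[q_neq1 q_dv_p not_q_eqp_p]] :
    exists q : {poly F}, [&& size q != 1, q %| p & ~~ (q %= p)].
  apply: NNPP => noq; apply: red_p; split=> // q q_neq1 q_dv_p.
  by apply/negPn/negP=> not_q_eqp_p; apply: noq; exists q; rewrite q_neq1 q_dv_p.
have nz_p : p != 0 by rewrite -size_poly_gt0 ltnW.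
have nz_q : q != 0 by apply: contraNneq nz_p => q0; move: q_dv_p; rewrite q0 dvd0p.
have lt_q_p : (size q < size p)%N.
  by rewrite ltn_neqAle dvdp_leq // andbT; apply: contra not_q_eqp_p; rewrite dvdp_size_eqp.
have [|r r_dv_q irr_r] := IHn q (leq_trans lt_q_p lt_p_n).
  by rewrite ltn_neqAle eq_sym q_neq1 size_poly_gt0.
by exists r => //; apply: dvdp_trans q_dv_p.
Qed.

Lemma exists_splitting_ext (F : fieldType) (p : {poly F}) : p != 0 ->
  exists (L : fieldExtType F) (zs : seq L),
    map_poly (in_alg L) p %= \prod_(z <- zs) ('X - z%:P).
Proof.
move=> nz_p; move: {2}_.+1 (ltnSn (size p)) => n.
elim: n => // n IHn in F p nz_p * => lt_p_n.
have [p_le1 | p_gt1] := leqP (size p) 1.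
  exists F^o, [::].
  by rewrite big_nil -size_poly_eq1 size_map_poly eqn_leq p_le1 size_poly_gt0.
have [r r_dv_p irr_r] := exists_irreducible_dvdp p_gt1.
have [K _ [x rx0 _]] := irredp_FAdjoin irr_r.
have /factor_theorem/sig_eqW[q Dp] : root (map_poly (in_alg K) p) x.
  by rewrite -(divpK r_dv_p) rmorphM rootM rx0 orbT.
have size_p : size p = size (q * ('X - x%:P)) by rewrite -Dp size_map_poly.
have nz_q : q != 0.
  by move: nz_p; rewrite -size_poly_eq0 size_p size_poly_eq0 mulf_eq0 => /norP[].
have [|L [zs Dq]] := IHn K q nz_q.
  by rewrite size_p size_mul ?polyXsubC_eq0 ?size_XsubC ?addn2 in lt_p_n.
exists (baseFieldType L), (x%:A :: zs).
have -> : map_poly (in_alg (baseFieldType L)) p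
    = map_poly (in_alg L) (map_poly (in_alg K) p).
  by rewrite -map_poly_comp; apply: eq_map_poly => a; rewrite /= baseField_scaleE.
rewrite Dp rmorphM /= rmorphB /= map_polyX map_polyC big_cons mulrC.
by rewrite eqp_mull.
Qed.

Lemma splittingFieldFor_adjoin_roots (F : fieldType) (M : fieldExtType F)
    (q : {poly F}) (zs : seq M) :
  map_poly (in_alg M) q %= \prod_(z <- zs) ('X - z%:P) ->
  splittingFieldFor 1 (map_poly (in_alg (subvs_of <<1 & zs>>%AS)) q) fullv.
Proof.
move=> Dq; pose toM := linfun (vsval : subvs_of <<1 & zs>>%AS -> M).
have [ws Dws] : exists ws, map toM ws = zs.
  exists (map (vsproj _) zs); rewrite -map_comp map_id_in // => z zs_z.
  by rewrite /= lfunE /= vsprojK ?seqv_sub_adjoin.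
exists ws.
  rewrite -(eqp_map toM) rmorph_prod -map_poly_comp.
  rewrite (eq_map_poly (rmorph_alg toM)) (eq_bigr (fun w => 'X - (toM w)%:P)).
    by rewrite -(big_map toM xpredT (fun z => 'X - z%:P)) Dws.
  by move=> w _; rewrite rmorphB /= map_polyX map_polyC.
apply/vspaceP=> u; rewrite memvf.
have : val u \in (toM @: <<1 & ws>>)%VS by rewrite aimg_adjoin_seq aimg1 Dws (valP u).
by case/memv_imgP=> v ws_v; rewrite lfunE => /val_inj->.
Qed.

Lemma ahom_corestr (F : fieldType) (L M : fieldExtType F) (i : 'AHom(L, M))
    (E : {subfield M}) :
  (limg i <= E)%VS -> {e : 'AHom(L, subvs_of E) | forall x, vsval (e x) = i x}.
Proof.
move=> /subvP iE; pose e : 'Hom(L, subvs_of E) := (linfun (vsproj E) \o i)%VF.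
have eE x : vsval (e x) = i x by rewrite comp_lfunE lfunE /= vsprojK ?iE ?memv_img ?memvf.
have eA : ahom_in fullv e.
  apply/ahom_inP; split=> [x y _ _|]; apply: subvs_inj.
    by rewrite rmorphM /= !eE rmorphM.
  by rewrite eE !rmorph1.
by exists (AHom eA) => x; apply: eE.
Qed.

Section BaseFieldEmbedding.
Variables (F : fieldType) (L : fieldExtType F) (M : fieldExtType L).

Definition in_base (x : L) : baseFieldType M := in_alg M x.

Fact in_base_linear : linear in_base.
Proof.
by move=> c x y; rewrite /in_base baseField_scaleE /= scalerDl scalerA mulr_algl.
Qed.
HB.instance Definition _ :=
  GRing.isLinear.Build F L (baseFieldType M) *:%R in_base in_base_linear.

Fact in_base_monoid_morphism : monoid_morphism in_base.
Proof. by split=> [|x y]; rewrite /in_base ?rmorph1 ?rmorphM. Qed.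
HB.instance Definition _ :=
  GRing.isMonoidMorphism.Build L (baseFieldType M) in_base in_base_monoid_morphism.

Definition in_base_ahom : 'AHom(L, baseFieldType M) := linfun_ahom in_base.

Lemma in_base_ahomE x : in_base_ahom x = in_alg M x.
Proof. by rewrite lfunE. Qed.

End BaseFieldEmbedding.

Lemma galois_closure (k : fieldType) (L : fieldExtType k) : separable 1 {:L} ->
  exists (E : splittingFieldType k) (e : 'AHom(L, E)), galois 1 {:E}.
Proof.
(* The roots of the minimal polynomial of a primitive element z of L, in a splitting
   field over L, generate a Galois closure of L. *)
move=> sepL; set z := separable_generator 1 {:L}%AS.
have Lz : {:L}%VS = <<1; z>>%VS.
  by rewrite -(eq_adjoin_separable_generator sepL (sub1v _)).
have /polyOver1P[q Dq] := minPolyOver 1 z.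
have sep_q : separable_poly q.
  by rewrite -(separable_map (in_alg L)) -Dq; apply: separable_generatorP.
have [M [zs Dzs]] := exists_splitting_ext (monic_neq0 (monic_minPoly 1 z)).
pose M' := baseFieldType M; pose zs' : seq M' := zs.
have DqM : map_poly (in_alg M') q = map_poly (in_alg M) (minPoly 1 z).
  by rewrite Dq -map_poly_comp; apply: eq_map_poly => c /=; rewrite baseField_scaleE.
have Dq' : map_poly (in_alg M') q %= \prod_(x <- zs') ('X - x%:P) by rewrite DqM.
pose E0 := <<1 & zs'>>%AS; pose E := subvs_of E0.
have splitE := splittingFieldFor_adjoin_roots Dq'.
have axE : splitting_field_axiom E.
  by exists (map_poly (in_alg E) q) => //; apply/polyOver1P; exists q.
pose ES : splittingFieldType k := HB.pack E (FieldExt_isSplittingField.Build k E axE).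
pose i := in_base_ahom M.
have iz_E0 : i z \in E0.
  apply: seqv_sub_adjoin; rewrite -root_prod_XsubC -(eqp_root Dq') DqM in_base_ahomE.
  by rewrite /root horner_map (rootP (root_minPoly _ _)) rmorph0.
have [|e _] := @ahom_corestr _ _ _ i E0.
  by rewrite Lz aimg_adjoin aimg1; apply/FadjoinP; rewrite sub1v.
exists ES, e; apply/splitting_galoisField; exists (map_poly (in_alg ES) q).
by split; [apply/polyOver1P; exists q | rewrite separable_map | exact: splitE].
Qed.

Lemma Gal_normQ_isog_kAut (k : fieldType) (L : fieldExtType k) (gT : finGroupType)
    (G : {group gT}) :
  separable 1 {:L} -> kAut_isog L G ->
  exists2 E : splittingFieldType k, galois 1 {:E} &
    exists H : {group gal_of {:E}}, ('N(H) / H \isog G)%g.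
Proof.
move=> sepL autL; have [E [e galE]] := galois_closure sepL.
pose K := (limg e)%AS; have [f fE] := @ahom_corestr _ _ _ e K (subvv _).
have f_onto : limg f = fullv.
  apply/vspaceP=> v; rewrite !memvf; have /memv_imgP[x _ Dv] := subvsP v.
  by apply/memv_imgP; exists x; rewrite ?memvf //; apply: subvs_inj; rewrite fE.
exists E => //; exists 'Gal({:E} / K)%G.
exact: kAut_isog_uniq (kAut_isog_normQ_Gal K galE) (kAut_isog_ahom f_onto autL).
Qed.

Lemma kAut_isog_normQ (k : fieldType) (E : splittingFieldType k)
    (H : {group gal_of {:E}}) :
  galois 1 {:E} -> exists L : fieldExtType k, separable 1 {:L} /\ kAut_isog L ('N(H) / H)%G.
Proof.
move=> galE; pose K := fixedField_aspace H.
exists (subvs_of K); split.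
  by apply: (separable_ahom (linfun_ahom (vsval : subvs_of K -> E))); case/and3P: galE.
have -> : H = 'Gal({:E} / K)%G by apply/val_inj; rewrite /= gal_fixedField.
exact: kAut_isog_normQ_Gal.
Qed.

Definition perm_set_code := {m : nat & {set {perm 'I_m}}}.

Definition decode_perm_set (n : nat) : perm_set_code :=
  odflt (Tagged (fun m => {set {perm 'I_m}}) (set0 : {set {perm 'I_0}})) (unpickle n).

Lemma pickle_perm_setK : cancel pickle decode_perm_set.
Proof. by move=> c; rewrite /decode_perm_set pickleK. Qed.

Definition Aut_realizable (k : fieldType) : Prop :=
  forall (gT : finGroupType) (G : {group gT}),
    exists L : fieldExtType k, separable 1 {:L} /\ kAut_isog L G.

Definition Gal_realizable (k : fieldType) (Gamma : nat -> finGroupType) : Prop :=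
  forall n : nat, (0 < n)%N ->
    exists L : splittingFieldType k, galois 1 {:L} /\ ('Gal({:L} / 1) \isog [set: Gamma n])%g.

Lemma Aut_realizable_REAL (k : fieldType) :
  Aut_realizable k -> exists Gamma, REAL Gamma /\ Gal_realizable k Gamma.
Proof.
move=> realize; pose P (c : perm_set_code) (E : splittingFieldType k) := galois 1 {:E} /\
  exists H : {group gal_of {:E}}, ('N(H) / H \isog <<tagged c>>)%g.
have [Ec EcP] : exists Ec, forall c : perm_set_code, P c (Ec c).
  apply: ClassicalEpsilon.choice => c; have [L [sepL autL]] := realize _ <<tagged c>>%G.
  by have [E galE NH] := Gal_normQ_isog_kAut sepL autL; exists E.
(* Gamma (n + 1) realises the permutation group coded by n. *)
exists (fun n => gal_of {:Ec (decode_perm_set n.-1)}); split.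
  move=> gT G; have [A GA] := Cayley_ord_isog G.
  pose c := Tagged (fun m => {set {perm 'I_m}}) (A : {set _}).
  exists (pickle c).+1; split=> //=; rewrite pickle_perm_setK.
  have [_ [H NH]] := EcP c; exists H; apply: isog_trans NH _.
  by rewrite /= genGid isog_sym.
by move=> n _; exists (Ec (decode_perm_set n.-1)); rewrite gal1T isog_refl (EcP _).1.
Qed.

Lemma REAL_Aut_realizable (k : fieldType) (Gamma : nat -> finGroupType) :
  REAL Gamma -> Gal_realizable k Gamma -> Aut_realizable k.
Proof.
move=> realG GalG gT G; have [n [n_gt0 [H NH]]] := realG gT G.
have [E [galE GalE]] := GalG n n_gt0; rewrite gal1T isog_sym in GalE.
have [H' NH'] := normQ_isog_transfer H GalE.
have [L [sepL autL]] := kAut_isog_normQ H' galE.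
exists L; split=> //; apply: kAut_isog_trans autL _.
exact: isog_trans (isog_symr NH) (isog_symr NH').
Qed.

Theorem mainTheorem2 (k : fieldType) :
  (forall (gT : finGroupType) (G : {group gT}),
     exists L : fieldExtType k, separable 1%VS (fullv : {vspace L}) /\ kAut_isog L G)
  <->
  (exists Gamma : nat -> finGroupType,
     REAL Gamma /\
     forall n : nat, (0 < n)%N ->
       exists L : splittingFieldType k,
         galois 1%VS (fullv : {vspace L}) /\
         ('Gal((fullv : {vspace L}) / 1%VS) \isog [set: Gamma n])%g).
Proof.
split=> [realize | [Gamma [realG GalG]]]; first exact: Aut_realizable_REAL.
exact: REAL_Aut_realizable realG GalG.
Qed.
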